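(* Let $\Sigma$ be a finite alphabet. For every unranked ordered $\Sigma$-labeled tree $t$, $|\mathrm{hdag}(t)| \le \min(|\mathrm{dag}(t)|, |\mathrm{bdag}(t)|)$.
   Context: An unranked tree over $\Sigma$ is a finite rooted tree with nodes labeled in $\Sigma$ and linearly ordered children (arbitrary finite number). Size means number of edges. $\mathrm{dag}(t)$ is the minimal dag of $t$: its nodes are the distinct subtrees of $t$, and the node of a subtree $f(s_1,\dots,s_k)$ has $k$ ordered edges to the nodes of $s_1,\dots,s_k$; thus $|\mathrm{dag}(t)|$ equals the sum, over all distinct subtrees $s$ of $t$, of the number of children of the root of $s$. The first-child/next-sibling encoding $\mathrm{fcns}$ maps a sequence of unranked trees to a binary tree (each node has an optional left and optional right child): $\mathrm{fcns}(\varepsilon)$ is empty and $\mathrm{fcns}(t_1t_2\cdots t_n)=f(\mathrm{fcns}(u_1\cdots u_m),\mathrm{fcns}(t_2\cdots t_n))$ when $t_1=f(u_1,\dots,u_m)$ (left child = first child, right child = next sibling). $\mathrm{bdag}(t)$ is the minimal dag of $\mathrm{fcns}(t)$ (identical subtrees merged), and $|\mathrm{bdag}(t)|$ its number of edges (edges to absent children are not counted). Hybrid dag: for each distinct subtree $s=f(s_1,\dots,s_k)$ of $t$ with $k\ge1$ introduce a fresh symbol $A_s$ and the height-one tree $\rho_s=f(\alpha_1,\dots,\alpha_k)$, where $\alpha_i$ is the label of $s_i$ if $s_i$ is a single node and $\alpha_i=A_{s_i}$ otherwise (the $\alpha_i$ are leaves). Let $\rho'_s$ be $\rho_s$ with its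 root additionally marked by $A_s$. Then $\mathrm{hdag}(t)$ is the minimal dag of the forest consisting of the binary trees $\mathrm{fcns}(\rho'_s)$ (identical subtrees anywhere in the forest are merged), and $|\mathrm{hdag}(t)|$ is its number of edges (edges to absent children not counted). *)

From HB Require Import structures.
From mathcomp Require Import all_boot.
Set Implicit Arguments. Unset Strict Implicit. Unset Printing Implicit Defensive.

Inductive tree (S : Type) : Type := Node of S & seq (tree S).
Arguments Node {S} _ _.

Section Trees.
Variable S : eqType.

Definition label (t : tree S) : S := let: Node a _ := t in a.
Definition children (t : tree S) : seq (tree S) := let: Node _ ts := t in ts.

Fixpoint tree_eqb (t1 t2 : tree S) {struct t1} : bool :=
  match t1, t2 with
  | Node a ts, Node b us =>
    (a == b) &&
    (fix eql (ts us : seq (tree S)) {struct ts} : bool :=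
       match ts, us with
       | [::], [::] => true
       | t :: ts', u :: us' => tree_eqb t u && eql ts' us'
       | _, _ => false
       end) ts us
  end.

Fixpoint tree_ind' (P : tree S -> Type)
  (H : forall a ts, foldr (fun t acc => (P t * acc)%type) unit ts -> P (Node a ts))
  (t : tree S) {struct t} : P t :=
  match t with
  | Node a ts => H a ts
      ((fix go (ts : seq (tree S)) : foldr (fun t acc => (P t * acc)%type) unit ts :=
          match ts with
          | [::] => tt
          | u :: us => (tree_ind' H u, go us)
          end) ts)
  end.

Lemma tree_eqP : Equality.axiom tree_eqb.
Proof.
move=> t1; elim/tree_ind': t1 => a ts IH [b us] /=.
have eql : forall us, reflect (ts = us)
    ((fix eql (ts us : seq (tree S)) {struct ts} : bool :=
       match ts, us with
       | [::], [::] => true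
       | t :: ts', u :: us' => tree_eqb t u && eql ts' us'
       | _, _ => false
       end) ts us).
  elim: ts IH => [|t ts IHts] /= IH [|u us'] /=; try by constructor.
  case: IH => IHt IH; case: (IHt u) => [->|neq] /=; last by constructor; case.
  by case: (IHts IH us') => [->|neq]; constructor; [|case].
case: (a =P b) => [->|neq] /=; last by constructor; case.
by case: (eql us) => [->|neq]; constructor; [|case].
Qed.

HB.instance Definition _ := hasDecEq.Build (tree S) tree_eqP.

Fixpoint subtrees (t : tree S) : seq (tree S) :=
  let: Node _ ts := t in
  t :: (fix sub (ts : seq (tree S)) : seq (tree S) :=
          match ts with [::] => [::] | u :: us => subtrees u ++ sub us end) ts.

Definition dag_size (t : tree S) : nat :=
  sumn [seq size (children s) | s <- undup (subtrees t)].

End Trees.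

Inductive btree (L : Type) : Type :=
| BNil : btree L
| BNode : L -> btree L -> btree L -> btree L.
Arguments BNil {L}.

Section BTrees.
Variable L : eqType.

Fixpoint btree_eqb (b1 b2 : btree L) : bool :=
  match b1, b2 with
  | BNil, BNil => true
  | BNode a l r, BNode a' l' r' => (a == a') && btree_eqb l l' && btree_eqb r r'
  | _, _ => false
  end.

Lemma btree_eqP : Equality.axiom btree_eqb.
Proof.
elim=> [|a l IHl r IHr] [|a' l' r'] /=; try by constructor.
case: (a =P a') => [->|neq] /=; last by constructor; case.
case: (IHl l') => [->|neq] /=; last by constructor; case.
by case: (IHr r') => [->|neq]; constructor; [|case].
Qed.

HB.instance Definition _ := hasDecEq.Build (btree L) btree_eqP.

Fixpoint bsubtrees (b : btree L) : seq (btree L) :=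
  if b is BNode _ l r then b :: bsubtrees l ++ bsubtrees r else [::].

Definition bout (b : btree L) : nat :=
  if b is BNode _ l r then (l != BNil) + (r != BNil) else 0.

(* number of edges of the minimal dag of a forest of binary trees
   (identical subtrees anywhere in the forest merged) *)
Definition bdag_forest_size (bs : seq (btree L)) : nat :=
  sumn [seq bout u | u <- undup (flatten [seq bsubtrees b | b <- bs])].

End BTrees.

(* first-child/next-sibling encoding of a sequence of unranked trees:
   fcns [::] = BNil and fcns (Node f us :: ts') = BNode f (fcns us) (fcns ts')
   (see lemma fcns_cons below). *)
Fixpoint fcns_t (S : Type) (t : tree S) (rest : btree S) : btree S :=
  let: Node f us := t in
  BNode f ((fix go (us : seq (tree S)) : btree S :=
              match us with [::] => BNil | u :: us' => fcns_t u (go us') end) us)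
        rest.

Definition fcns (S : Type) (ts : seq (tree S)) : btree S := foldr (@fcns_t S) BNil ts.

Lemma fcns_nil (S : Type) : fcns (S := S) [::] = BNil.
Proof. by []. Qed.

Lemma fcns_cons (S : Type) (f : S) (us ts : seq (tree S)) :
  fcns (Node f us :: ts) = BNode f (fcns us) (fcns ts).
Proof. by rewrite /fcns /=; congr BNode; elim: us. Qed.

Section Sizes.
Variable S : eqType.

Definition bdag_size (t : tree S) : nat := bdag_forest_size [:: fcns [:: t]].

(* Labels of the hybrid-dag forest:
   inl (inl a)   : the symbol a of S (leaf alpha_i = label of a single-node s_i)
   inl (inr s)   : the fresh nonterminal A_s (leaf alpha_i = A_{s_i})
   inr (f, s)    : the root label f of rho_s additionally marked by A_s *)
Definition hlab := ((S + tree S) + (S * tree S))%type.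

Definition halpha (u : tree S) : hlab :=
  if children u is [::] then inl (inl (label u)) else inl (inr u).

(* fcns of a sequence of leaves with the given labels *)
Fixpoint leaf_chain (xs : seq hlab) : btree hlab :=
  if xs is x :: xs' then BNode x BNil (leaf_chain xs') else BNil.

Definition fcns_rho' (s : tree S) : btree hlab :=
  BNode (inr (label s, s)) (leaf_chain [seq halpha u | u <- children s]) BNil.

Definition hdag_size (t : tree S) : nat :=
  bdag_forest_size [seq fcns_rho' s | s <- undup (subtrees t) & children s != [::]].

End Sizes.

From mathcomp Require Import all_boot.
Set Implicit Arguments. Unset Strict Implicit. Unset Printing Implicit Defensive.

(* Each rho'_s has exactly as many edges as the root of s has children, so
   |hdag(t)| <= |dag(t)| already before merging.  For bdag, a node z of
   fcns(t) is fcns(s u_1 ... u_m) for a sibling suffix s u_1 ... u_m; its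
   first-child edge pays for the edge leaving the root of fcns(rho'_s), and its
   next-sibling edge for the edge leaving the leaf-chain node of fcns(rho'_p)
   labelled alpha(s), p the parent of s.  Every node of the hdag forest arises
   in one of these two ways, so merging identical nodes can only help. *)

Lemma sumn_undup_le (T : eqType) (w : T -> nat) (Y X : seq T) :
  {subset Y <= X} -> sumn [seq w y | y <- undup Y] <= sumn [seq w x | x <- X].
Proof.
move=> YX; rewrite !sumnE !big_map.
apply: sub_le_big_seq => [//|m n|y]; first exact: leq_addr.
rewrite count_uniq_mem ?undup_uniq // mem_undup.
by case: (boolP (y \in Y)) => // /YX; rewrite -has_pred1 has_count.
Qed.

Lemma sumn_map_filter_zero (T : Type) (P : pred T) (f : T -> nat) (s : seq T) :
  (forall x, ~~ P x -> f x = 0) -> sumn (map f (filter P s)) = sumn (map f s).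
Proof.
move=> f0; elim: s => //= x s IH; case: ifP => Px /=; rewrite IH //.
by rewrite f0 ?Px.
Qed.

Section Forests.
Variable S : eqType.
Implicit Types (ts us : seq (tree S)) (b : btree S).

Definition forest_subtrees ts : seq (tree S) :=
  flatten [seq subtrees u | u <- ts].

Lemma forest_subtrees_cons f cs ts :
  forest_subtrees (Node f cs :: ts) =
  Node f cs :: forest_subtrees cs ++ forest_subtrees ts.
Proof. by rewrite /forest_subtrees /=; congr (_ :: _ ++ _); elim: cs => //= u us ->. Qed.

Lemma forest_ind (P : seq (tree S) -> Prop) :
  P [::] -> (forall f cs ts, P cs -> P ts -> P (Node f cs :: ts)) ->
  forall ts, P ts.
Proof.
move=> P0 PS ts; have [n] := ubnP (size (forest_subtrees ts)).
elim: n ts => // n IH [|[f cs] ts] //.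
rewrite forest_subtrees_cons /= size_cat ltnS => lt_n.
by apply: PS; apply: IH; apply: leq_ltn_trans lt_n; rewrite ?leq_addr ?leq_addl.
Qed.

Fixpoint unfcns b : seq (tree S) :=
  if b is BNode a l r then Node a (unfcns l) :: unfcns r else [::].

Lemma fcnsK : cancel (@fcns S) unfcns.
Proof. by elim/forest_ind => // f cs ts IHcs IHts; rewrite fcns_cons /= IHcs IHts. Qed.

Lemma bsubtrees_trans b b' :
  b' \in bsubtrees b -> {subset bsubtrees b' <= bsubtrees b}.
Proof.
elim: b => // a l IHl r IHr /=; rewrite inE => /orP [/eqP -> //|].
by rewrite mem_cat => /orP [/IHl|/IHr] sub y /sub y_in; rewrite inE mem_cat y_in ?orbT.
Qed.

Lemma bsubtrees_self b : b != BNil -> b \in bsubtrees b.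
Proof. by case: b => //= *; rewrite inE eqxx. Qed.

Lemma fcns_drop_bsubtrees ts i : i < size ts ->
  fcns (drop i ts) \in bsubtrees (fcns ts).
Proof.
elim: ts i => // [[f cs]] ts IH [|i] lt_i; rewrite fcns_cons; first exact: bsubtrees_self.
by rewrite /= inE mem_cat IH ?orbT.
Qed.

Lemma forest_subtree_fcns ts s : s \in forest_subtrees ts ->
  exists us, fcns (s :: us) \in bsubtrees (fcns ts).
Proof.
elim/forest_ind: ts => // f cs ts IHcs IHts.
rewrite forest_subtrees_cons in_cons mem_cat fcns_cons /=.
case/orP => [/eqP ->|/orP [/IHcs|/IHts] [us us_in]].
- by exists ts; rewrite -fcns_cons bsubtrees_self.
- by exists us; rewrite in_cons mem_cat us_in orbT.
- by exists us; rewrite in_cons mem_cat us_in !orbT.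
Qed.

End Forests.

Section HybridDag.
Variable S : eqType.
Implicit Types (t s : tree S) (xs : seq (hlab S)) (z : btree S).

Lemma sumn_bout_leaf_chain xs :
  sumn [seq bout u | u <- bsubtrees (leaf_chain xs)] = (size xs).-1.
Proof. by elim: xs => // x xs /= ->; case: xs. Qed.

Lemma bsubtrees_leaf_chain xs y : y \in bsubtrees (leaf_chain xs) ->
  exists2 i, i < size xs & y = leaf_chain (drop i xs).
Proof.
elim: xs => // x xs IH /=; rewrite in_cons => /orP [/eqP ->|]; first by exists 0.
by case/IH => i lt_i ->; exists i.+1.
Qed.

Lemma sumn_bout_fcns_rho' s : children s != [::] ->
  sumn [seq bout u | u <- bsubtrees (fcns_rho' s)] = size (children s).
Proof.
case: s => a [|c cs] //= _; rewrite cats0 sumn_bout_leaf_chain size_map.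
by case: cs.
Qed.

Lemma hdag_size_le_dag t : hdag_size t <= dag_size t.
Proof.
rewrite /hdag_size /bdag_forest_size /dag_size.
apply: leq_trans (sumn_undup_le _ (fun _ y => y)) _.
rewrite map_flatten sumn_flatten -!map_comp.
rewrite -[leqRHS](@sumn_map_filter_zero _ (fun s => children s != [::])); last first.
  by move=> s; rewrite negbK => /eqP ->.
apply/eq_leq/congr1/eq_in_map => s.
by rewrite mem_filter => /andP [nleaf _]; exact: sumn_bout_fcns_rho'.
Qed.

Definition rho_node z : btree (hlab S) :=
  if unfcns z is s :: _ then if children s != [::] then fcns_rho' s else BNil
  else BNil.

Definition alpha_chain z : btree (hlab S) :=
  leaf_chain [seq halpha u | u <- unfcns z].

Lemma bout_rho_alpha z : bout z = bout (rho_node z) + bout (alpha_chain z).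
Proof. by case: z => // a [|? ? ?] [|? ? ?]. Qed.

Lemma rho_node_fcns s us :
  children s != [::] -> rho_node (fcns (s :: us)) = fcns_rho' s.
Proof. by rewrite /rho_node fcnsK => ->. Qed.

Lemma alpha_chain_fcns ts :
  alpha_chain (fcns ts) = leaf_chain [seq halpha u | u <- ts].
Proof. by rewrite /alpha_chain fcnsK. Qed.

Definition hdag_forest t : seq (btree (hlab S)) :=
  [seq fcns_rho' s | s <- undup (subtrees t) & children s != [::]].

Lemma hdag_nodes_covered t (Z := bsubtrees (fcns [:: t])) :
  {subset flatten [seq bsubtrees b | b <- hdag_forest t]
     <= map rho_node (undup Z) ++ map alpha_chain (undup Z)}.
Proof.
move=> y /flatten_mapP [_ /mapP [s + ->]].
rewrite mem_filter mem_undup mem_cat => /andP [nleaf s_in].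
have [us us_in] : exists us, fcns (s :: us) \in Z.
  by apply: forest_subtree_fcns; rewrite /forest_subtrees /= cats0.
case: s nleaf us_in {s_in} => a cs nleaf us_in.
rewrite /fcns_rho' /= cats0 in_cons => /orP [/eqP ->|].
  apply/orP; left; apply/mapP; exists (fcns (Node a cs :: us)).
    by rewrite mem_undup.
  by rewrite rho_node_fcns.
case/bsubtrees_leaf_chain => i; rewrite size_map => lt_i ->.
apply/orP; right; apply/mapP; exists (fcns (drop i cs)).
  rewrite mem_undup; apply: (bsubtrees_trans us_in).
  by rewrite fcns_cons /= in_cons mem_cat fcns_drop_bsubtrees ?orbT.
by rewrite alpha_chain_fcns map_drop.
Qed.

Lemma hdag_size_le_bdag t : hdag_size t <= bdag_size t.
Proof.
have := sumn_undup_le (@bout _) (@hdag_nodes_covered t).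
rewrite /hdag_size /bdag_size /bdag_forest_size => /leq_trans; apply.
rewrite /= cats0 map_cat sumn_cat !sumnE !big_map -big_split /=.
by apply/eq_leq/eq_bigr => z _; rewrite bout_rho_alpha.
Qed.

End HybridDag.

Theorem theorem1 (Sigma : finType) (t : tree Sigma) :
  hdag_size t <= minn (dag_size t) (bdag_size t).
Proof. by rewrite leq_min hdag_size_le_dag hdag_size_le_bdag. Qed.
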